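(* Let $n\ge 1$, let $S=\{s_1,\dots,s_{n-1}\}$ with $s_i=(i,i+1)$ be the simple reflections of $S_n$, let $I_n=\{\pi\in S_n : \pi^2=\mathrm{id}\}$, and let $V_n$ be the $\mathbb{Q}$-vector space with basis $\{C_w : w\in I_n\}$. Define $\rho:S\to GL(V_n)$ by $\rho(s)C_w=\mathrm{sign}(s;w)\,C_{sws}$ for $s\in S$, $w\in I_n$, where $\mathrm{sign}(s;w)=-1$ if $sws=w$ and $s\in\mathrm{Des}(w)$, and $\mathrm{sign}(s;w)=1$ otherwise. Then $\rho$ extends (uniquely) to a group homomorphism $S_n\to GL(V_n)$, i.e. it determines a representation of $S_n$.
   Context: $\ell(\pi)$ is the Coxeter length of $\pi\in S_n$ with respect to $S$ (the number of inversions), and the descent set is $\mathrm{Des}(\pi)=\{s\in S:\ell(\pi s)<\ell(\pi)\}$; equivalently $s_i\in\mathrm{Des}(\pi)$ iff $\pi(i)>\pi(i+1)$. *)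

From HB Require Import structures.
From mathcomp Require Import all_boot all_order all_algebra all_fingroup.
Set Implicit Arguments. Unset Strict Implicit. Unset Printing Implicit Defensive.
Import GRing.Theory.
Local Open Scope ring_scope.

(* Permutations of {0,...,n-1} ('I_n); s_i = (i, i+1) with 0-based indices. *)

Definition simple_refl (n : nat) (s : 'S_n) : bool :=
  [exists i : 'I_n, exists j : 'I_n, (val j == (val i).+1)%N && (s == tperm i j)].

Definition in_des (n : nat) (w s : 'S_n) : bool :=
  [exists i : 'I_n, exists j : 'I_n,
     [&& (val j == (val i).+1)%N, s == tperm i j & (w j < w i)%N]].

Notation invol n := {w : 'S_n | w * w == 1}%g.

(* V_n: the Q-vector space with basis indexed by I_n (coordinate functions). *)
Notation Vn n := {ffun invol n -> rat^o}.

(* Basis vector C_x (x an involution; C_x = 0 if x is not an involution,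
   which never happens below since sws is always an involution). *)
Definition Cb (n : nat) (x : 'S_n) : Vn n :=
  [ffun u : invol n => ((val u == x)%:R : rat^o)].

Definition sgn (n : nat) (s w : 'S_n) : rat :=
  if (s * w * s == w)%g && in_des w s then -1 else 1.

Definition rho (n : nat) (s : 'S_n) (v : Vn n) : Vn n :=
  \sum_(w : invol n) (v w * sgn s (val w)) *: Cb (s * val w * s)%g.

Definition is_rep (n : nat) (phi : 'S_n -> Vn n -> Vn n) : Prop :=
  [/\ (forall g (a : rat) (u v : Vn n), phi g (a *: u + v) = a *: phi g u + phi g v),
      (forall g, bijective (phi g)) &
      (forall g h v, phi (g * h)%g v = phi g (phi h v))].

From HB Require Import structures.
From mathcomp Require Import all_boot all_order all_algebra all_fingroup.
From mathcomp Require Import zify.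
Set Implicit Arguments. Unset Strict Implicit. Unset Printing Implicit Defensive.
Import GRing.Theory.
Local Open Scope ring_scope.

(* Instead of checking the Coxeter relations for rho, we write down the
   representation in closed form.  S_n acts on the involutions by conjugation,
   and for g in S_n and an involution x we put
     cocycle g x = product, over the 2-cycles (i, x i) with i < x i, of
                   -1 if g^-1 reverses the order of i and x i, else +1.
   The operator  rep g C_x = cocycle g x C_(x^(g^-1))  is then a
   representation as soon as cocycle satisfies the 1-cocycle identity
   cocycleM; the identity reduces to the fact (prod_arcs) that a product over
   the 2-cycles of an involution does not depend on which endpoint of each
   2-cycle is chosen.  For an adjacent transposition s = (k, k+1), s reverses
   only the pair (k, k+1), so cocycle s x = -1 exactly when (k, k+1) is a
   2-cycle of x, which is exactly when sxs = x and s is a descent of x; hence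
   rep s = rho s.  Uniqueness holds because the adjacent transpositions
   generate S_n (simple_refl_gen). *)

Section ArcProducts.
Variables (T : finType) (R : comPzRingType) (x : {perm T}).

Definition selects_arcs (P : pred T) : Prop :=
  (forall i, P i -> x i != i) /\ (forall i, x i != i -> P (x i) = ~~ P i).

Lemma prod_arcs (F : T -> R) (P Q : pred T) :
  (forall i, F (x i) = F i) -> selects_arcs P -> selects_arcs Q ->
  \prod_(i | P i) F i = \prod_(i | Q i) F i.
Proof.
move=> Fx [Pmoved Px] [Qmoved Qx].
rewrite (bigID Q) [RHS](bigID P) /=.
congr (_ * _); first by apply: eq_bigl => i; rewrite andbC.
rewrite (reindex_inj (@perm_inj _ x)) /=.
apply: eq_big => [i|i /andP[Pi _]]; last by rewrite Fx.
have [xi|moved] := eqVneq (x i) i; last by rewrite Px // Qx // negbK andbC.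
rewrite xi; case Pi: (P i); first by have := Pmoved i Pi; rewrite xi eqxx.
by case Qi: (Q i) => //; have := Qmoved i Qi; rewrite xi eqxx.
Qed.

Hypothesis xx : (x * x = 1)%g.

Lemma invol_permK : involutive x.
Proof. by move=> i; rewrite -permM xx perm1. Qed.

Lemma selects_arcs_ltn (f : T -> nat) : injective f ->
  selects_arcs (fun i => (f i < f (x i))%N).
Proof.
move=> f_inj; split=> [i|i xi].
  by apply: contraTneq => ->; rewrite ltnn.
by rewrite invol_permK ltnNge leq_eqVlt negb_or (inj_eq f_inj) eq_sym xi.
Qed.

End ArcProducts.

Section Cocycle.
Variable n : nat.
Implicit Types (g h x : 'S_n) (i j : 'I_n).

Definition pair_sign g i j : rat := if (i < j)%N == (g i < g j)%N then 1 else -1.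

Lemma pair_signM g h i j :
  pair_sign (g * h)%g i j = pair_sign g i j * pair_sign h (g i) (g j).
Proof.
rewrite /pair_sign !permM.
by case: (i < j)%N; case: (g i < g j)%N; case: (h (g i) < h (g j))%N;
  rewrite ?mulr1 ?mul1r ?mulrNN.
Qed.

Lemma pair_signC g i j : i != j -> pair_sign g i j = pair_sign g j i.
Proof.
move=> ij; have gij : g i != g j by rewrite (inj_eq perm_inj).
rewrite /pair_sign; move: ij gij; rewrite -!val_eqE /=.
by case: ltngtP => // _ _; case: ltngtP.
Qed.

Definition cocycle g x : rat :=
  \prod_(i : 'I_n | (i < x i)%N) pair_sign g^-1 i (x i).

Lemma cocycle1 x : cocycle 1 x = 1.
Proof. by rewrite /cocycle invg1; apply: big1 => i _; rewrite /pair_sign !perm1 eqxx. Qed.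

(* The 1-cocycle identity; rewritten through pair_signM, it compares two
   products over the 2-cycles of x oriented by i < x i and by
   h^-1 i < h^-1 (x i) respectively, which agree by prod_arcs. *)
Lemma cocycleM g h x : (x * x = 1)%g ->
  cocycle (g * h) x = cocycle h x * cocycle g (x ^ h^-1).
Proof.
move=> xx; rewrite /cocycle invMg.
under eq_bigr => i _ do rewrite pair_signM.
rewrite big_split /=; congr (_ * _).
have conjE j : (x ^ h^-1)%g (h^-1%g j) = h^-1%g (x j).
  by rewrite conjgE invgK !permM permKV.
rewrite [RHS](reindex_inj (@perm_inj _ h^-1%g)) /=.
under [RHS]eq_big => [j|j _] do [rewrite conjE|rewrite conjE].
apply: prod_arcs; last 2 first.
- exact: (selects_arcs_ltn xx val_inj).
- exact: (selects_arcs_ltn xx (inj_comp val_inj (@perm_inj _ h^-1%g))).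
move=> i; have [xi_fix|xi] := eqVneq (x i) i; first by rewrite !xi_fix.
by rewrite (invol_permK xx) pair_signC // (inj_eq perm_inj).
Qed.

End Cocycle.

Section Representation.
Variable n : nat.
Implicit Types (g h : 'S_n) (u : invol n) (v : Vn n).

Lemma conjg_invol g u : (val u ^ g * val u ^ g == 1)%g.
Proof. by rewrite -conjMg (eqP (valP u)) conj1g. Qed.

Definition conj_invol g u : invol n := Sub (val u ^ g)%g (conjg_invol g u).

Lemma conj_invol1 u : conj_invol 1 u = u.
Proof. by apply: val_inj; rewrite /= conjg1. Qed.

Lemma conj_involM g h u : conj_invol (g * h) u = conj_invol h (conj_invol g u).
Proof. by apply: val_inj; rewrite /= conjgM. Qed.

(* The candidate representation: (rep g v) at u is v at u^g times a sign,
   i.e. rep g C_x = cocycle g x C_(x^(g^-1)). *)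
Definition rep g v : Vn n :=
  [ffun u => v (conj_invol g u) * cocycle g (val (conj_invol g u))].

Lemma rep1 v : rep 1 v = v.
Proof. by apply/ffunP => u; rewrite ffunE conj_invol1 cocycle1 mulr1. Qed.

Lemma repM g h v : rep (g * h) v = rep g (rep h v).
Proof.
apply/ffunP => u; rewrite !ffunE conj_involM -mulrA; congr (_ * _).
by rewrite (cocycleM _ _ (eqP (valP (conj_invol h (conj_invol g u))))) /= conjgK.
Qed.

Lemma rep_is_rep : is_rep rep.
Proof.
split; [move=> g a u v | move=> g | exact: repM].
  by apply/ffunP => w; rewrite !ffunE mulrDl scalerAl.
by exists (rep g^-1) => v; rewrite -repM ?mulVg ?mulgV rep1.
Qed.

Lemma rho_conj (s : 'S_n) v : (s * s = 1)%g ->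
  rho s v = [ffun u => v (conj_invol s u) * sgn s (val (conj_invol s u))].
Proof.
move=> ss; have sV : s^-1%g = s by rewrite -[s^-1%g]mulg1 -ss mulKg.
have conj_s (y : 'S_n) : (y ^ s = s * y * s)%g by rewrite conjgE sV mulgA.
apply/ffunP => u; rewrite /rho sum_ffunE !ffunE (bigD1 (conj_invol s u)) //=.
rewrite big1 ?addr0 => [|w /eqP w_neq]; rewrite /Cb !ffunE.
  by rewrite -conj_s -conjgM ss conjg1 eqxx; exact: mulr1.
have [u_eq|] := eqVneq (val u) (s * val w * s)%g; last by rewrite scaler0.
by case: w_neq; apply: val_inj; rewrite /= u_eq -conj_s -conjgM ss conjg1.
Qed.

End Representation.

Section AdjacentTransposition.
Variables (n : nat) (k l : 'I_n).
Hypothesis kl : l = k.+1 :> nat.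

Lemma adj_tperm_ltn (i j : 'I_n) : (i < j)%N ->
  (tperm k l i < tperm k l j)%N = ~~ ((i == k) && (j == l)).
Proof.
move=> ij; have tperm_val z : tperm k l z =
    (if z == k :> nat then l else if z == l :> nat then k else z) :> nat.
  by case: tpermP => [->|->|/eqP zk /eqP zl]; rewrite ?eqxx //;
    [case: eqP => [->|] | rewrite !val_eqE (negbTE zk) (negbTE zl)].
rewrite !tperm_val; change (i == k) with (i == k :> nat); change (j == l) with (j == l :> nat).
move: ij kl.
case: (eqVneq (i : nat) k); case: (eqVneq (i : nat) l);
  case: (eqVneq (j : nat) k); case: (eqVneq (j : nat) l); lia.
Qed.

Lemma cocycle_adj (x : 'S_n) : cocycle (tperm k l) x = if x k == l then -1 else 1.
Proof.
rewrite /cocycle tpermV; under eq_bigr => i lt do rewrite /pair_sign lt (adj_tperm_ltn lt).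
have [xk|xk] := eqVneq (x k) l.
  rewrite (bigD1 k) /=; last by rewrite xk kl.
  rewrite xk !eqxx /= big1 ?mulr1 // => i /andP[_ /negbTE->] //.
by apply: big1 => i _; have [->|ik] := eqVneq i k; rewrite ?eqxx ?(negbTE xk) ?(negbTE ik).
Qed.

Lemma in_des_adj (w : 'S_n) : in_des w (tperm k l) = (w l < w k)%N.
Proof.
apply/existsP/idP => [[i /existsP[j /and3P[/eqP ji /eqP tij wji]]]|wlk]; last first.
  by exists k; apply/existsP; exists l; rewrite eqxx wlk !andbT; apply/eqP.
suff [ik jl] : i = k /\ j = l by rewrite -ik -jl.
have : tperm k l i = j by rewrite tij tpermL.
case: tpermP => [-> <-//|il jk|_ _ ij]; last by move: ji; rewrite ij; lia.
by move: ji kl; rewrite il -jk /=; lia.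
Qed.

Lemma adj_fixed_des (x : 'S_n) : (x * x = 1)%g ->
  ((tperm k l * x * tperm k l == x)%g && (x l < x k)%N) = (x k == l).
Proof.
move=> xx; have xK := invol_permK xx.
apply/andP/eqP => [[/eqP comm lt]|xk].
  have := congr1 (fun p : 'S_n => p k) comm; rewrite !permM tpermL.
  case: (tpermP k l (x l)) => [_ <-//|xll xkk|_ _ /perm_inj lk].
    by move: lt kl; rewrite xll -xkk /=; lia.
  by move: kl; rewrite lk; lia.
have xl : x l = k by rewrite -xk xK.
split; last by rewrite xk xl kl.
apply/eqP/permP => z; rewrite !permM.
case: (tpermP k l z) => [->|->|zk zl]; first by rewrite xl tpermL xk.
  by rewrite xk tpermR xl.
have kxz : k != x z by apply/eqP => e; apply: zl; rewrite -[z]xK -e xk.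
have lxz : l != x z by apply/eqP => e; apply: zk; rewrite -[z]xK -e xl.
by rewrite tpermD.
Qed.

Lemma sgn_adj (x : 'S_n) : (x * x = 1)%g -> sgn (tperm k l) x = cocycle (tperm k l) x.
Proof. by move=> xx; rewrite /sgn in_des_adj adj_fixed_des // cocycle_adj. Qed.

End AdjacentTransposition.

Lemma rep_simple n (s : 'S_n) v : simple_refl s -> rep s v = rho s v.
Proof.
case/existsP => k /existsP[l /andP[/eqP kl /eqP ->]].
rewrite rho_conj ?tperm2 //; apply/ffunP => u; rewrite !ffunE sgn_adj //.
exact: (eqP (valP (conj_invol _ u))).
Qed.

(* The adjacent transpositions generate S_n: the transpositions (0, j) do,
   and (0, j+1) is the conjugate of (0, j) by (j, j+1). *)
Lemma simple_refl_gen n : <<[set s : 'S_n | simple_refl s]>>%g = [set: 'S_n].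
Proof.
apply/eqP; rewrite eqEsubset subsetT /=.
case: n => [|m].
  apply/subsetP => s _; suff -> : s = 1%g by exact: group1.
  by apply/permP => -[].
rewrite -(gen_tperm ord0) gen_subG; apply/subsetP => _ /imsetP[[j lt] _ ->].
elim: j lt => [|j IH] lt.
  by rewrite (_ : Ordinal lt = ord0) ?tperm1 ?group1 //; apply: val_inj.
set a : 'I_m.+1 := Ordinal (ltnW lt); set b : 'I_m.+1 := Ordinal lt.
have ab_simple : tperm a b \in [set s | simple_refl s].
  by rewrite inE; apply/existsP; exists a; apply/existsP; exists b; rewrite !eqxx.
have [j0|j_gt0] := posnP j.
  by rewrite (_ : ord0 = a) ?mem_gen //; apply: val_inj; rewrite /= j0.
have -> : tperm ord0 b = (tperm ord0 a ^ tperm a b)%g.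
  by rewrite tpermJ tpermL tpermD // -val_eqE /= -?lt0n // (ltn_trans j_gt0).
exact: (groupJ (IH _) (mem_gen ab_simple)).
Qed.

Lemma simple_refl_ind n (P : 'S_n -> Prop) :
  P 1%g -> (forall g h, P g -> P h -> P (g * h)%g) ->
  (forall s, simple_refl s -> P s) -> forall g, P g.
Proof.
move=> P1 PM Ps g; have : g \in <<[set s : 'S_n | simple_refl s]>>%g.
  by rewrite simple_refl_gen inE.
case/gen_prodgP => m [c c_simple ->]; apply: big_ind => // i _.
by apply: Ps; have := c_simple i; rewrite inE.
Qed.

(* A representation maps 1 to the identity (bijectivity cancels psi 1). *)
Lemma is_rep1 n (psi : 'S_n -> Vn n -> Vn n) : is_rep psi -> forall v, psi 1%g v = v.
Proof. by move=> [_ psi_bij psiM] v; apply: (bij_inj (psi_bij 1%g)); rewrite -psiM mulg1. Qed.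

Lemma rep_unique n (psi phi : 'S_n -> Vn n -> Vn n) : is_rep psi -> is_rep phi ->
  (forall s, simple_refl s -> forall v, psi s v = phi s v) ->
  forall g v, psi g v = phi g v.
Proof.
move=> psi_rep phi_rep agree; apply: simple_refl_ind => [v|g h IHg IHh v|//].
  by rewrite !is_rep1.
by case: psi_rep phi_rep => [_ _ psiM] [_ _ phiM]; rewrite psiM phiM IHh IHg.
Qed.

Theorem theorem1p1 (n : nat) (hn : (0 < n)%N) :
  exists phi : 'S_n -> Vn n -> Vn n,
    [/\ is_rep phi,
        (forall s, simple_refl s -> forall v, phi s v = rho s v) &
        (forall psi : 'S_n -> Vn n -> Vn n, is_rep psi ->
           (forall s, simple_refl s -> forall v, psi s v = rho s v) ->
           forall g v, psi g v = phi g v)].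
Proof.
exists (@rep n); split; [exact: rep_is_rep | move=> s s_simple v; exact: rep_simple |].
move=> psi psi_rep psi_simple; apply: rep_unique psi_rep (rep_is_rep n) _.
by move=> s s_simple v; rewrite psi_simple // rep_simple.
Qed.
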